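(* For integers $n_1\ge n_2\ge0$, let $$A(n_1,n_2)=\sum_{i=0}^{n_2}\binom{n_2}{i}\,n_1(n_1-1)\cdots(n_1-i+1),$$ where the $i=0$ term is $1$. Then: - if $n_1\ge2$, $A(n_1,n_2)\le\frac{n_1}{n_1-1}\,n_1^{n_2}$; - if $n_2\ge4$, $A(n_1,n_2)\le n_1^{n_2}$. *)

From mathcomp Require Import all_boot all_order all_algebra.
Set Implicit Arguments. Unset Strict Implicit. Unset Printing Implicit Defensive.

Definition A (n1 n2 : nat) : nat := \sum_(0 <= i < n2.+1) 'C(n2, i) * n1 ^_ i.

(* Sorting the terms of A by whether they use the last of the n2 objects gives
   the Pascal-type recurrence A(k+1, m+1) = A(k+1, m) + (k+1) A(k, m), while the
   binomial theorem together with k ^_ i <= k ^ i gives A(k, m) <= (k+1)^m.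
   Feeding the latter into the recurrence proves both bounds by induction on n2:
   the first from the base case A(n, 0) = 1, the second from the explicit
   polynomial A(n, 4) = n^4 - 2n^3 + 5n^2 + 1. *)
From mathcomp Require Import all_boot all_order all_algebra.
From mathcomp Require Import zify.
Import Order.TTheory GRing.Theory Num.Theory.

Lemma ffact_leq_expn n m : n ^_ m <= n ^ m.
Proof.
rewrite ffact_prod -[in n ^ m](card_ord m) -prod_nat_const.
by apply: leq_prod => i _; rewrite leq_subr.
Qed.

Lemma A_leq_expS n m : A n m <= n.+1 ^ m.
Proof.
rewrite /A big_mkord -[n.+1]add1n expnDn; apply: leq_sum => i _.
by rewrite exp1n mul1n leq_mul2l ffact_leq_expn orbT.
Qed.

Lemma A_SS n m : A n.+1 m.+1 = A n.+1 m + n.+1 * A n m.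
Proof.
rewrite /A big_nat_recl //= bin0 ffactn0.
under eq_bigr => i _ do rewrite binS mulnDl ffactSS.
rewrite big_split /= addnA big_distrr /=; congr addn.
- rewrite big_nat_recr //= bin_small // mul0n addn0.
  by rewrite [in RHS]big_nat_recl // bin0 ffactn0.
- by apply: eq_bigr => i _; rewrite mulnCA.
Qed.

Lemma A_mul_pred_leq n m : A n m * n.-1 <= n ^ m.+1.
Proof.
case: n => [|k] /=; first by rewrite muln0.
elim: m => [|m IHm]; first by rewrite /A big_nat1 bin0 ffactn0 !mul1n expn1.
have tail_leq : k.+1 * A k m * k <= k * k.+1 ^ m.+1.
  by rewrite mulnAC (mulnC k.+1) -mulnA leq_mul2l expnS leq_mul2l A_leq_expS !orbT.
by rewrite A_SS mulnDl [k.+1 ^ m.+2]expnS [k.+1 * k.+1 ^ _]mulSn leq_add.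
Qed.

Lemma A4_leq_expn n : 4 <= n -> A n 4 <= n ^ 4.
Proof.
case: n => [|[|[|[|k]]]] // _.
rewrite /A !big_nat_recr //= big_geq // !ffactSS !ffactn0.
rewrite bin0 binn (_ : 'C(4, 1) = 4) // (_ : 'C(4, 2) = 6) // (_ : 'C(4, 3) = 4) //.
nia.
Qed.

Lemma mulSn_expn_leq k m : 0 < m -> k.+1 * k ^ m <= k * k.+1 ^ m.
Proof.
case: m => // m _; rewrite !expnS mulnCA !leq_mul2l.
by case: m => [|m]; rewrite ?expn0 ?leq_exp2r ?leqnSn ?orbT.
Qed.

Lemma A_leq_expn n m : 4 <= m <= n -> A n m <= n ^ m.
Proof.
elim: m n => [//|m IHm] n /andP[]; rewrite leq_eqVlt => /orP[/eqP [<-]|/[!ltnS] m_ge4 m_lt_n].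
  exact: A4_leq_expn.
case: n m_lt_n => [//|k] m_le_k.
have IH1 : A k.+1 m <= k.+1 ^ m by apply: IHm; rewrite m_ge4 ltnW.
have IH2 : A k m <= k ^ m by apply: IHm; rewrite m_ge4.
rewrite A_SS expnS [k.+1 * k.+1 ^ m]mulSn leq_add //.
apply: (@leq_trans (k.+1 * k ^ m)); first by rewrite leq_mul2l IH2 orbT.
exact/mulSn_expn_leq/(leq_trans _ m_ge4).
Qed.

Theorem mainTheorem4 (n1 n2 : nat) (h : (n2 <= n1)%N) :
  ((2 <= n1)%N ->
     ((A n1 n2)%:R : rat) <= (n1%:R / (n1.-1)%:R) * (n1 ^ n2)%:R)%R
  /\ ((4 <= n2)%N -> (A n1 n2 <= n1 ^ n2)%N).
Proof.
split=> [n1_ge2|n2_ge4]; last by apply: A_leq_expn; rewrite n2_ge4 h.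
have pred_gt0 : (0 < n1.-1%:R :> rat)%R by rewrite ltr0n -ltnS prednK // ltnW.
rewrite mulrAC ler_pdivlMr // -!natrM ler_nat -expnS.
exact: A_mul_pred_leq.
Qed.
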